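(* Let $\mathbf{k}$ be a field with $\mathrm{char}(\mathbf{k}) > d$, let $n \geq 1$, let $\alpha_1,\dots,\alpha_d \in M_n(\mathbf{k})$, and put $T = x_1\alpha_1 + \dots + x_d\alpha_d \in M_n(\mathbf{k}\langle x_1,\dots,x_d\rangle)$. Suppose that \[ \chi_d(T) := \sum_{\sigma\in S_d}(T - x_{\sigma(1)})(T - x_{\sigma(2)})\cdots(T - x_{\sigma(d)}) = 0 \quad \text{in } M_n(\mathbf{k}\langle x_1,\dots,x_d\rangle). \] Then: (1) for some $i \in \{1,\dots,d\}$, $\alpha_i$ has an eigenvector with eigenvalue $1$; and (2) for every $i$, if $m \in \mathbf{k}^n$ satisfies $\alpha_i m = m$, then $\alpha_j m = 0$ for all $j \neq i$.
   Context: $\mathbf{k}\langle x_1,\dots,x_d\rangle$ is the free associative $\mathbf{k}$-algebra on $x_1,\dots,x_d$; in $M_n(\mathbf{k}\langle x_1,\dots,x_d\rangle)$ the scalars $x_i$ commute with the constant matrices $\alpha_j$, and $x_{\sigma(j)}$ denotes the scalar matrix $x_{\sigma(j)}\cdot I_n$. The product over $j=1,\dots,d$ is taken in that order. *)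

From HB Require Import structures.
From mathcomp Require Import all_boot all_order all_algebra all_fingroup.
Set Implicit Arguments. Unset Strict Implicit. Unset Printing Implicit Defensive.
Import GRing.Theory.
Local Open Scope ring_scope.

(* Elements of M_n(k<x_1,...,x_d>) are represented as noncommutative
   (formal) series in x_1..x_d with coefficients in M_n(k): a function from
   words over 'I_d to 'M[k]_n (the coefficient of the monomial x_{w_1}...x_{w_m}).
   Since the x_i commute with constant matrices, M_n(k<x>) = M_n(k)<x>;
   polynomials embed injectively into series, so equalities agree. *)
Definition ncmx (K : fieldType) (n d : nat) := seq 'I_d -> 'M[K]_n.

Section NC.
Variables (K : fieldType) (n d : nat).
Local Notation S := (ncmx K n d).

Definition nc_zero : S := fun _ => 0.
Definition nc_add (P Q : S) : S := fun w => P w + Q w.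
Definition nc_opp (P : S) : S := fun w => - P w.
Definition nc_mul (P Q : S) : S :=
  fun w => \sum_(k < (size w).+1) P (take k w) *m Q (drop k w).
Definition nc_one : S := fun w => if w is [::] then 1%:M else 0.
Definition nc_const (A : 'M[K]_n) : S := fun w => if w is [::] then A else 0.
Definition nc_var (i : 'I_d) : S := fun w => if w == [:: i] then 1%:M else 0.

Definition ncT (alpha : 'I_d -> 'M[K]_n) : S :=
  \big[nc_add/nc_zero]_(i < d) nc_mul (nc_var i) (nc_const (alpha i)).

Definition chi_d (alpha : 'I_d -> 'M[K]_n) : S :=
  \big[nc_add/nc_zero]_(s : 'S_d)
     \big[nc_mul/nc_one]_(j < d) nc_add (ncT alpha) (nc_opp (nc_var (s j))).
End NC.

From HB Require Import structures.
From mathcomp Require Import all_boot all_order all_algebra all_fingroup.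
Import GRing.Theory.
Local Open Scope ring_scope.
Set Implicit Arguments. Unset Strict Implicit.

(** Both parts come from the coefficients of [chi_d(T)] on words [x_w] of
length [d]: since [T] and the [x_i] are linear, that coefficient is
[\sum_s \prod_j (alpha_(w j) - [w j = s j])], and it vanishes.
For (2), the word [x_j x_i ... x_i] applied to an [m] fixed by [alpha_i]
gives [(d-1)! alpha_j m = 0].
For (1), substitute for the [x_k] the commuting Lagrange polynomials [L_k]
with [L_k(l) = [k = l]] at the points [l = 0, ..., d-1]. All [d!] products
then agree, so [\prod_j (S - L_j) = 0] with [S = \sum_k L_k alpha_k]; some
[det (S - L_j)] vanishes, and evaluating it at [j] gives
[det (alpha_j - 1) = 0]. The hypothesis [char K > d] makes [(d-1)!], [d!]
and the differences of the points invertible. *)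

Section LinearCoefficients.
Variables (K : fieldType) (n' d : nat).
Local Notation n := n'.+1.
Local Notation S := (ncmx K n d).

Definition nc_homog1 (P : S) := forall u, size u != 1%N -> P u = 0.

Lemma nc_sumE I (r : seq I) (P : pred I) (F : I -> S) w :
  (\big[@nc_add K n d/@nc_zero K n d]_(i <- r | P i) F i) w =
  \sum_(i <- r | P i) F i w.
Proof. by elim/big_rec2: _ => // i x y _ <-. Qed.

Lemma nc_mul_homog1 (P Q : S) x w :
  nc_homog1 P -> nc_mul P Q (x :: w) = P [:: x] * Q w.
Proof.
move=> homP; rewrite /nc_mul /= big_ord_recl homP // mul0mx add0r.
rewrite big_ord_recl /= take0 drop0 big1 ?addr0 // => k _.
by rewrite homP ?mul0mx //= add0n /bump leq0n size_takel.
Qed.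

Lemma nc_prod_homog1 m (F : 'I_m -> S) (f : 'I_m -> 'I_d) :
  (forall j, nc_homog1 (F j)) ->
  (\big[@nc_mul K n d/@nc_one K n d]_(j < m) F j) [seq f j | j <- enum 'I_m] =
  \prod_(j < m) F j [:: f j].
Proof.
elim: m F f => [|m IH] F f homF; first by rewrite enum_ord0 !big_ord0.
by rewrite enum_ordSl /= !big_ord_recl nc_mul_homog1 // -map_comp IH.
Qed.

Lemma nc_var_homog1 i : nc_homog1 (@nc_var K n d i).
Proof. by move=> u; rewrite /nc_var; case: (u =P _) => [->|]. Qed.

Lemma nc_var1 i x : @nc_var K n d i [:: x] = (x == i)%:R%:M.
Proof. by rewrite /nc_var eqseq_cons andbT; case: eqP; rewrite ?raddf0. Qed.

Variable alpha : 'I_d -> 'M[K]_n.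

Lemma ncT_homog1 : nc_homog1 (ncT alpha).
Proof.
move=> u su; rewrite /ncT nc_sumE big1 // => i _.
rewrite /nc_mul big1 // => k _; rewrite /nc_const.
case Eu: (drop k u) => [|y v]; last by rewrite mulmx0.
have -> : take k u = u by apply: take_oversize; rewrite -subn_eq0 -size_drop Eu.
by rewrite nc_var_homog1 ?mul0mx.
Qed.

Lemma ncT1 x : ncT alpha [:: x] = alpha x.
Proof.
rewrite /ncT nc_sumE (bigD1 x) //= big1 => [|i ix].
  rewrite /nc_mul !big_ord_recl big_ord0 /= nc_var1 eqxx.
  by rewrite mul1mx mul0mx add0r !addr0.
rewrite /nc_mul !big_ord_recl big_ord0 /= nc_var1 eq_sym (negbTE ix).
by rewrite mul_scalar_mx scale0r mulmx0 !addr0.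
Qed.

(* The coefficient of [x_x] in [T - x_y]. *)
Definition coef_Tsub (y x : 'I_d) : 'M[K]_n := alpha x - (x == y)%:R%:M.

Lemma coef_chi (f : 'I_d -> 'I_d) :
  chi_d alpha [seq f j | j <- enum 'I_d] =
  \sum_(s : 'S_d) \prod_(j < d) coef_Tsub (s j) (f j).
Proof.
rewrite /chi_d nc_sumE; apply: eq_bigr => s _.
rewrite nc_prod_homog1 => [|j u su]; last first.
  by rewrite /nc_add /nc_opp ncT_homog1 // nc_var_homog1 // oppr0 addr0.
by apply: eq_bigr => j _; rewrite /nc_add /nc_opp ncT1 nc_var1.
Qed.

End LinearCoefficients.

Lemma natr_neq0_pchar_gt (K : fieldType) d k :
  (forall p, p \in [pchar K] -> (d < p)%N) -> (0 < k <= d)%N -> k%:R != 0 :> K.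
Proof.
move=> pcharK /andP[k_gt0 k_le_d]; rewrite natf_neq0_pchar.
apply/pnatP => // p p_pr p_dvd_k; rewrite inE /=; apply/negP => /pcharK.
by rewrite ltnNge (leq_trans (dvdn_leq k_gt0 p_dvd_k) k_le_d).
Qed.

Lemma fact_natr_neq0_pchar_gt (K : fieldType) d k :
  (forall p, p \in [pchar K] -> (d < p)%N) -> (k <= d)%N -> k`!%:R != 0 :> K.
Proof.
move=> pcharK; elim: k => [|k IH] k_lt_d; first by rewrite oner_neq0.
rewrite factS natrM mulf_neq0 ?IH ?(ltnW k_lt_d) //.
exact: natr_neq0_pchar_gt pcharK _.
Qed.

Lemma card_perm_sends (T : finType) (x y : T) :
  #|[set s : {perm T} | s x == y]| = (#|T|.-1)`!.
Proof.
rewrite -(cardsC1 x) -(card_perm [set~ x]).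
rewrite -(card_imset _ (mulIg (tperm x y))); apply: eq_card => s.
apply/imsetP/idP => [[t] | s_on].
  rewrite inE => /eqP tx ->{s}; apply/subsetP => z; rewrite !inE.
  by apply: contra => /eqP ->; rewrite permM tx tpermR.
exists (s * tperm x y)%g; last by rewrite -mulgA tperm2 mulg1.
rewrite inE permM (out_perm s_on) ?inE ?eqxx ?tpermL //.
Qed.

Lemma prodmx_eigen (R : comNzRingType) n' r (F : 'I_r -> 'M[R]_n'.+1)
    (c : 'I_r -> R) (m : 'cV[R]_n'.+1) :
  (forall k, F k *m m = c k *: m) ->
  (\prod_(k < r) F k) *m m = (\prod_(k < r) c k) *: m.
Proof.
elim: r F c => [|r IH] F c Fm; first by rewrite !big_ord0 mul1mx scale1r.
rewrite !big_ord_recl -mulmxA (IH _ (c \o lift ord0)) => [|k]; last exact: Fm.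
by rewrite -scalemxAr Fm scalerA mulrC.
Qed.

Lemma prod_perm_lift0_neq (R : comNzRingType) d' (s : 'S_d'.+1) i :
  \prod_(k < d') (i != s (lift ord0 k))%:R = (s ord0 == i)%:R :> R.
Proof.
have [<-|s0_neq_i] := eqVneq (s ord0) i.
  by rewrite big1 // => k _; rewrite (inj_eq perm_inj) neq_lift.
case: (unliftP ord0 (s^-1 i)%g) => [k si_k|si_0]; last first.
  by rewrite -[i](permKV s) -si_0 eqxx in s0_neq_i.
by rewrite (bigD1 (k : 'I_d')) //= -si_k permKV eqxx mul0r.
Qed.

Section FixedVectors.
Variables (K : fieldType) (d' n' : nat) (alpha : 'I_d'.+1 -> 'M[K]_n'.+1).
Hypothesis pcharK : forall p, p \in [pchar K] -> (d'.+1 < p)%N.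
Hypothesis chi0 : forall w, chi_d alpha w = 0.

Lemma fixed_vector_annihilated i j (m : 'cV[K]_n'.+1) :
  alpha i *m m = m -> j != i -> alpha j *m m = 0.
Proof.
move=> alpha_i_m j_neq_i.
pose f (k : 'I_d'.+1) := if k == ord0 then j else i.
have eigen_f (s : 'S_d'.+1) (k : 'I_d') :
    coef_Tsub alpha (s (lift ord0 k)) (f (lift ord0 k)) *m m =
    (i != s (lift ord0 k))%:R *: m.
  rewrite /f eq_sym (negbTE (neq_lift _ _)) mulmxBl alpha_i_m mul_scalar_mx.
  by case: (i == _); rewrite ?scale1r ?scale0r ?subrr ?subr0.
have chi_term (s : 'S_d'.+1) :
    (\prod_(k < d'.+1) coef_Tsub alpha (s k) (f k)) *m m =
    (s ord0 == i)%:R *: (alpha j *m m).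
  rewrite big_ord_recl -mulmxA (prodmx_eigen (eigen_f s)) prod_perm_lift0_neq.
  rewrite -scalemxAr; case: eqP => [->|_]; last by rewrite !scale0r.
  rewrite /coef_Tsub /f eqxx (negbTE j_neq_i).
  by rewrite -[false%:R]/(0 : K) raddf0 subr0.
have := congr1 (mulmx^~ m) (chi0 [seq f k | k <- enum 'I_d'.+1]).
rewrite coef_chi mul0mx mulmx_suml (eq_bigr _ (fun s _ => chi_term s)).
rewrite -scaler_suml -natr_sum -big_mkcond sum1dep_card card_perm_sends.
move/eqP; rewrite scaler_eq0 card_ord /= => /orP[|/eqP //].
by rewrite (negbTE (fact_natr_neq0_pchar_gt pcharK (leqnSn d'))).
Qed.

End FixedVectors.

Lemma fixed_vector_of_det (K : fieldType) n (A : 'M[K]_n) :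
  \det (A - 1%:M) = 0 -> exists2 m : 'cV[K]_n, m != 0 & A *m m = m.
Proof.
rewrite -det_tr => /eqP /det0P[v v_neq0 vA]; exists v^T.
  by apply: contraNneq v_neq0 => /(congr1 trmx); rewrite trmxK trmx0 => ->.
apply/eqP; rewrite -subr_eq0 -[X in _ - X]mul1mx -mulmxBl.
by rewrite -[_ *m _]trmxK trmx_mul trmxK vA trmx0.
Qed.

Section EigenvalueOne.
Variables (K : fieldType) (d n' : nat) (alpha : 'I_d -> 'M[K]_n'.+1).
Hypothesis pcharK : forall p, p \in [pchar K] -> (d < p)%N.
Hypothesis chi0 : forall w, chi_d alpha w = 0.
Local Notation n := n'.+1.

Definition node (l : 'I_d) : K := l%:R.

Lemma node_sub_neq0 (k l : 'I_d) : l != k -> node k - node l != 0.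
Proof.
have node_lt (a b : 'I_d) : (a < b)%N -> node b - node a != 0.
  move=> a_lt_b; rewrite /node -natrB ?(ltnW a_lt_b) //.
  rewrite (natr_neq0_pchar_gt pcharK) //.
  by rewrite subn_gt0 a_lt_b (leq_trans (leq_subr _ _) (ltnW (ltn_ord b))).
case: (ltngtP l k) => [/node_lt //|/node_lt|/val_inj->]; last by rewrite eqxx.
by rewrite -opprB oppr_eq0.
Qed.

Definition lagrange_node (k : 'I_d) : {poly K} :=
  \prod_(l | l != k) (('X - (node l)%:P) * ((node k - node l)^-1)%:P).

Lemma lagrange_nodeE k l : (lagrange_node k).[node l] = (k == l)%:R.
Proof.
rewrite /lagrange_node horner_prod; have [<-|k_neq_l] := eqVneq k l.
  rewrite big1 // => j j_neq_k.
  by rewrite hornerM hornerXsubC hornerC divff ?node_sub_neq0.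
by rewrite (bigD1 l) 1?eq_sym //= hornerM hornerXsubC subrr !mul0r.
Qed.

Local Notation L := lagrange_node.

Definition lagrange_comb : 'M[{poly K}]_n :=
  \sum_k L k *: map_mx polyC (alpha k).
Local Notation S := lagrange_comb.

Lemma lagrange_comb_subE y :
  S - (L y)%:M = \sum_k L k *: map_mx polyC (coef_Tsub alpha y k).
Proof.
under [RHS]eq_bigr => k _ do rewrite map_mxB map_scalar_mx scalerBr.
rewrite sumrB; congr (_ - _); rewrite (bigD1 y) //= big1 => [|k k_neq_y].
  by rewrite eqxx rmorph1 scale_scalar_mx mulr1 addr0.
by rewrite (negbTE k_neq_y) polyC0 raddf0 scaler0.
Qed.

Lemma sum_perm_lagrange_comb_sub :
  \sum_(s : 'S_d) \prod_(j < d) (S - (L (s j))%:M) = 0.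
Proof.
under eq_bigr => s _ do
  rewrite (eq_bigr _ (fun j _ => lagrange_comb_subE (s j))) bigA_distr_bigA /=.
rewrite exchange_big /=; apply: big1 => f _.
under eq_bigr => s _ do rewrite scaler_prod -rmorph_prod.
by rewrite -scaler_sumr -raddf_sum -coef_chi chi0 raddf0 scaler0.
Qed.

Lemma prod_perm_lagrange_comb_sub (s : 'S_d) :
  \prod_(j < d) (S - (L (s j))%:M) = \prod_(j < d) (S - (L j)%:M).
Proof.
have horner_S c : S - c%:M = horner_mx S ('X - c%:P).
  by rewrite rmorphB /= horner_mx_X horner_mx_C.
under eq_bigr do rewrite horner_S.
under [RHS]eq_bigr do rewrite horner_S.
by rewrite -!rmorph_prod [in RHS](reindex_inj (@perm_inj _ s)).
Qed.

Lemma prod_lagrange_comb_sub : \prod_(j < d) (S - (L j)%:M) = 0.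
Proof.
have := sum_perm_lagrange_comb_sub.
under eq_bigr do rewrite prod_perm_lagrange_comb_sub.
rewrite sumr_const card_Sn -scaler_nat => /eqP; rewrite scalemx_eq0.
rewrite -polyC_natr polyC_eq0.
by rewrite (negbTE (fact_natr_neq0_pchar_gt pcharK (leqnn d))) => /eqP.
Qed.

Lemma horner_lagrange_comb_sub j :
  map_mx (horner_eval (node j)) (S - (L j)%:M) = alpha j - 1%:M.
Proof.
rewrite map_mxB map_scalar_mx /= horner_evalE lagrange_nodeE eqxx raddf_sum.
rewrite (bigD1 j) //= big1 => [|k k_neq_j]; last first.
  by rewrite map_mxZ /= horner_evalE lagrange_nodeE (negbTE k_neq_j) scale0r.
rewrite map_mxZ /= horner_evalE lagrange_nodeE eqxx scale1r addr0 -map_mx_comp.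
by rewrite map_mx_id // => a /=; rewrite horner_evalE hornerC.
Qed.

Lemma exists_fixed_vector :
  exists i, exists2 m : 'cV[K]_n, m != 0 & alpha i *m m = m.
Proof.
have /eqP := congr1 determinant prod_lagrange_comb_sub.
rewrite det0 (big_morph _ (@det_mulmx _ _) (@det1 _ n)).
case/prodf_eq0 => j _ /eqP det_j; exists j; apply: fixed_vector_of_det.
by rewrite -horner_lagrange_comb_sub det_map_mx det_j rmorph0.
Qed.

End EigenvalueOne.

Unset Implicit Arguments.

Theorem mainTheorem5 (K : fieldType) (d n : nat) (alpha : 'I_d -> 'M[K]_n) :
  (forall p : nat, p \in [pchar K] -> (d < p)%N) ->
  (0 < n)%N ->
  (forall w : seq 'I_d, chi_d alpha w = 0) ->
  (exists i : 'I_d, exists2 m : 'cV[K]_n, m != 0 & alpha i *m m = m) /\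
  (forall (i : 'I_d) (m : 'cV[K]_n), alpha i *m m = m ->
     forall j : 'I_d, j != i -> alpha j *m m = 0).
Proof.
case: n alpha => [//|n'] alpha pcharK _ chi0; split.
  exact: exists_fixed_vector.
case: d alpha pcharK chi0 => [|d'] alpha pcharK chi0 i; first by case: i.
move=> m m_fixed j j_neq_i.
exact: (fixed_vector_annihilated pcharK chi0 m_fixed).
Qed.
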